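(* Let $G$ be a finite group with conjugacy classes $\mathcal{C}_1,\dots,\mathcal{C}_s$, let $r\geq 2$ be a prime, and let $g\in G\wr S_n$ have type $T(g)=(T(g)_{ij})_{s\times n}$. Then for $1\le i\le s$, $1\le j\le n$, $$T(g^r)_{i,j}=\begin{cases}\sum_{z=1}^{m}T(g)_{y_z,j}+rT(g)_{i,rj} & \text{if } r\nmid j,\\ rT(g)_{i,rj} & \text{if } r\mid j,\end{cases}$$ where $\{y_1,\dots,y_m\}\subseteq\{1,\dots,s\}$ is the set of all indices $k$ with $(\mathcal{C}_k)^r=\mathcal{C}_i$, and by convention $T(g)_{i,rj}=0$ when $rj>n$.
   Context: $G\wr S_n$ is the set of pairs $(f,\pi)$ with $f:\{1,\dots,n\}\to G$ and $\pi\in S_n$, with product $(f,\pi)(f',\pi')=(ff'_\pi,\pi\pi')$, $f'_\pi(i)=f'(\pi^{-1}(i))$, pointwise product of functions. For $(f,\pi)$ and a cycle $(j,\pi(j),\dots,\pi^t(j))$ of $\pi$, its cycle product is $f(j)f(\pi^{-1}(j))\cdots f(\pi^{-t}(j))$; its conjugacy class is independent of the starting point. The type $T(g)$ of $g=(f,\pi)$ is the $s\times n$ matrix whose $(i,k)$ entry is the number of $k$-cycles of $\pi$ whose cycle product lies in $\mathcal{C}_i$. For a conjugacy class $\mathcal{C}$ of $G$, $(\mathcal{C})^r=\{x^r: x\in\mathcal{C}\}$, which is again a conjugacy class of $G$. *)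

From mathcomp Require Import all_boot all_fingroup.
Set Implicit Arguments. Unset Strict Implicit. Unset Printing Implicit Defensive.
Local Open Scope group_scope.

Section Wreath.
Variables (gT : finGroupType) (n : nat).

Definition wreath := ({ffun 'I_n -> gT} * {perm 'I_n})%type.

(* The paper composes permutations as functions (pi pi')(i) = pi(pi'(i)),
   which in MathComp (where (s * t) x = t (s x)) is pi' * pi. *)
Definition wmul (g h : wreath) : wreath :=
  ([ffun i => g.1 i * h.1 ((g.2)^-1 i)], h.2 * g.2).

Definition wone : wreath := ([ffun => 1], 1).

Definition wpow (g : wreath) (r : nat) : wreath := iter r (wmul g) wone.

Definition cycprod (g : wreath) (j : 'I_n) : gT :=
  \prod_(k < #|porbit g.2 j|) g.1 ((g.2^-1 ^+ k)%g j).

(* T(g)_{C,k}: number of k-cycles of pi whose cycle product lies in C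
   (the conjugacy class of the cycle product is independent of the start). *)
Definition wtype (g : wreath) (C : {set gT}) (k : nat) : nat :=
  #|[set O in porbits g.2 | (#|O| == k) &&
        [exists j in O, cycprod g j \in C]]|.

End Wreath.

Definition class_pow (gT : finGroupType) (C : {set gT}) (r : nat) : {set gT} :=
  [set x ^+ r | x in C].

From mathcomp Require Import all_boot all_fingroup.
Set Implicit Arguments. Unset Strict Implicit. Unset Printing Implicit Defensive.

(* Write k(x) for the length of the pi-cycle through x and c(x) for the cycle
   product started at x.  The pi^r-cycle through x has length
   k(x) / gcd(k(x), r) and cycle product c(x) ^ (r / gcd(k(x), r)).  For r
   prime, a cycle whose length is prime to r stays a cycle of the same length
   with product c(x)^r, and a cycle of length r j splits into r cycles of
   length j with product c(x).  Counting points rather than cycles (the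
   k-cycles with a given property cover k times as many points) turns this
   into an identity of cardinalities, and c^r lies in C exactly when the
   class D of c satisfies D^r = C. *)

Lemma gcdn_prime k r : prime r -> gcdn k r = if r %| k then r else 1.
Proof.
move=> r_prime; case: ifP => [/gcdn_idPr // | r_ndvd].
by apply/eqP; rewrite -/(coprime k r) coprime_sym prime_coprime ?r_ndvd.
Qed.

Section PermutationOrbits.
Local Open Scope group_scope.
Variable T : finType.
Implicit Types (s : {perm T}) (x : T).

Lemma card_porbit_dvdn s x m : (#|porbit s x| %| m) = ((s ^+ m) x == x).
Proof.
set k := #|porbit s x|.
have k_gt0 : 0 < k by rewrite lt0n card_porbit_neq0.
have sk_x q : (s ^+ (k * q)) x = x by rewrite expgM permX_fix // permX iter_porbit.
rewrite {2}(divn_eq m k) mulnC expgD permM sk_x /dvdn permX.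
have U := uniq_traject_porbit s x.
move: (ltn_pmod m k_gt0); move: (m %% k) => i ik.
apply/esym; rewrite -(nth_traject s ik) -[X in _ == X](nth_traject s k_gt0).
by rewrite (nth_uniq x _ _ U) ?size_traject.
Qed.

Lemma card_porbitX s x m :
  #|porbit (s ^+ m) x| = #|porbit s x| %/ gcdn #|porbit s x| m.
Proof.
set k := #|porbit s x|.
have card_pow_dvdn i : (#|porbit (s ^+ m) x| %| i) = (k %| m * i).
  by rewrite card_porbit_dvdn card_porbit_dvdn expgM.
apply/eqP; rewrite eqn_dvd card_pow_dvdn -muln_divCA_gcd dvdn_mulr //=.
have [-> | m_gt0] := posnP m; first by rewrite gcdn0 divnn lt0n card_porbit_neq0.
(* k %/ gcdn k m * m is lcmn k m *)
rewrite -(dvdn_pmul2r m_gt0) divn_mulAC ?dvdn_gcdl // dvdn_lcm.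
by rewrite {1}mulnC -card_pow_dvdn dvdnn dvdn_mull.
Qed.

Lemma card_porbitX_prime s x r : prime r ->
  #|porbit (s ^+ r) x| =
    if r %| #|porbit s x| then #|porbit s x| %/ r else #|porbit s x|.
Proof.
by move=> r_prime; rewrite card_porbitX gcdn_prime //; case: ifP; rewrite ?divn1.
Qed.

Lemma card_porbit_points s (P : pred T) k :
    (forall x y, y \in porbit s x -> P y = P x) ->
  #|[set x | (#|porbit s x| == k) && P x]| =
    (k * #|[set O in porbits s | (#|O| == k) && [exists y in O, P y]]|)%N.
Proof.
move=> P_porbit; rewrite mulnC; apply: card_uniform_partition.
  by move=> O; rewrite inE => /andP[_ /andP[/eqP ->]].
apply/and3P; split.
- apply/eqP/setP => x; rewrite inE; apply/bigcupP/idP.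
    case=> O; rewrite inE => /andP[/imsetP[z _ ->]].
    case/andP=> /eqP kz /existsP[y /andP[yO Py]] xO.
    have -> : porbit s x = porbit s z by apply/eqP; rewrite eq_porbit_mem.
    by rewrite kz eqxx (P_porbit z x xO) -(P_porbit z y yO).
  case/andP=> /eqP kx Px; exists (porbit s x); last exact: porbit_id.
  by rewrite inE imset_f // kx eqxx; apply/existsP; exists x; rewrite porbit_id.
- apply/trivIsetP => _ _ /setIdP[/imsetP[a _ ->] _] /setIdP[/imsetP[b _ ->] _].
  apply: contraR => /pred0Pn[z /andP[za zb]].
  have /eqP <- : porbit s z == porbit s a by rewrite eq_porbit_mem.
  by rewrite eq_porbit_mem.
- apply/negP => /setIdP[/imsetP[z _ z0] _].
  by have := porbit_id s z; rewrite -z0 inE.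
Qed.

End PermutationOrbits.

Section NatIndexedProducts.
Local Open Scope group_scope.
Variables (gT : finGroupType) (h : nat -> gT).

Lemma prod_ord_mul a b :
  \prod_(t < a * b) h t = \prod_(k < a) \prod_(l < b) h (k * b + l)%N.
Proof.
elim: a => [|a IHa]; first by rewrite !big_ord0.
by rewrite big_ord_recr -IHa mulSnr big_split_ord.
Qed.

Lemma prod_ord_periodic k a : (forall t, h (t + k)%N = h t) ->
  \prod_(t < a * k) h t = (\prod_(t < k) h t) ^+ a.
Proof.
move=> h_periodic; have h_shift b t : h (b * k + t)%N = h t.
  elim: b => [|b IHb]; first by rewrite mul0n.
  by rewrite mulSnr -addnA [(k + t)%N]addnC addnA h_periodic.
elim: a => [|a IHa]; first by rewrite big_ord0.
rewrite mulSnr big_split_ord IHa expgSr; congr (_ * _).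
by apply: eq_bigr => t _; rewrite h_shift.
Qed.

End NatIndexedProducts.

Section ClassPowers.
Local Open Scope group_scope.
Variable gT : finGroupType.
Implicit Types (c : gT) (C D : {set gT}).

Lemma class_pow_class c r : class_pow (c ^: [set: gT]) r = (c ^+ r) ^: [set: gT].
Proof.
apply/setP => y; apply/imsetP/imsetP => [[_ /imsetP[h _ ->] ->] | [h _ ->]].
  by exists h; rewrite ?conjXg.
by exists (c ^ h); rewrite ?conjXg ?memJ_class ?inE.
Qed.

Lemma class_eq_mem c C : C \in classes [set: gT] -> (c ^: [set: gT] == C) = (c \in C).
Proof. by case/imsetP => a _ ->; apply/eqP/class_eqP. Qed.

Lemma card_preim_class_pow (T : finType) (P : pred T) (f : T -> gT) r C :
    C \in classes [set: gT] ->
  #|[set x | P x && (f x ^+ r \in C)]| =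
    \sum_(D in classes [set: gT] | class_pow D r == C) #|[set x | P x && (f x \in D)]|.
Proof.
move=> C_class; rewrite -sum1_card.
pose C_roots := [pred D | (D \in classes [set: gT]) && (class_pow D r == C)].
rewrite (partition_big (fun x => f x ^: [set: gT]) C_roots) /=; last first.
  move=> x; rewrite inE => /andP[_ fxC].
  by rewrite mem_classes ?inE // class_pow_class class_eq_mem.
apply: eq_bigr => D /andP[/imsetP[a _ ->] /eqP aC]; rewrite -sum1_card.
apply: eq_bigl => x; rewrite !inE -aC; case: (P x) => //=.
apply/andP/idP => [[_ /eqP <-] | /class_eqP fx_a]; first exact: class_refl.
by rewrite -fx_a class_pow_class class_refl.
Qed.

End ClassPowers.

Section WreathPowers.
Local Open Scope group_scope.
Variables (gT : finGroupType) (n : nat).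
Implicit Types (g : wreath gT n) (x y : 'I_n).

Lemma wpowE g m :
  wpow g m = ([ffun i => \prod_(l < m) g.1 ((g.2^-1 ^+ l) i)], g.2 ^+ m).
Proof.
elim: m => [|m IHm].
  by congr pair; apply/ffunP => i; rewrite !ffunE big_ord0.
rewrite /wpow iterS -/(wpow g m) IHm expgSr; congr pair; apply/ffunP => i.
rewrite !ffunE big_ord_recl expg0 perm1; congr (_ * _).
by apply: eq_bigr => l _; rewrite expgS permM.
Qed.

Lemma wpow_perm g m : (wpow g m).2 = g.2 ^+ m.
Proof. by rewrite wpowE. Qed.

Lemma cycprod_permV g y : cycprod g (g.2^-1 y) = cycprod g y ^ g.1 y.
Proof.
rewrite /cycprod; have -> : #|porbit g.2 (g.2^-1 y)| = #|porbit g.2 y|.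
  by rewrite -(porbitV g.2 (g.2^-1 y)) -(porbitV g.2 y) -{2}(expg1 g.2^-1) porbit_perm.
have := card_porbit_dvdn g.2^-1 y #|porbit g.2 y|; rewrite porbitV dvdnn => /esym/eqP.
case: #|porbit g.2 y| (card_porbit_neq0 g.2 y) => [//|k] _ cyc.
rewrite big_ord_recr big_ord_recl expg0 perm1 -permM -expgS cyc /conjg -mulgA mulKg.
by congr (_ * _); apply: eq_bigr => t _; rewrite -permM -expgS.
Qed.

Lemma cycprod_porbit_class g x y : y \in porbit g.2 x ->
  cycprod g y ^: [set: gT] = cycprod g x ^: [set: gT].
Proof.
rewrite -porbitV => /porbitP[i ->]; elim: i => [|i IHi]; first by rewrite expg0 perm1.
by rewrite expgSr permM cycprod_permV classGidl ?inE.
Qed.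

Lemma cycprod_wpow g m x :
  cycprod (wpow g m) x = cycprod g x ^+ (m %/ gcdn #|porbit g.2 x| m).
Proof.
pose h t := g.1 ((g.2^-1 ^+ t) x).
have h_periodic t : h (t + #|porbit g.2 x|)%N = h t.
  have := card_porbit_dvdn g.2^-1 x #|porbit g.2 x|; rewrite porbitV dvdnn => /esym/eqP.
  by rewrite /h addnC expgD permM => ->.
rewrite wpowE /cycprod /= card_porbitX.
transitivity (\prod_(t < #|porbit g.2 x| %/ gcdn #|porbit g.2 x| m * m) h t).
  rewrite prod_ord_mul; apply: eq_bigr => k _; rewrite ffunE; apply: eq_bigr => l _.
  by rewrite /h expgD permM -expgVn -expgM mulnC.
by rewrite mulnC -muln_divCA_gcd mulnC prod_ord_periodic.
Qed.

Lemma cycprod_wpow_prime g r x : prime r ->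
  cycprod (wpow g r) x =
    if r %| #|porbit g.2 x| then cycprod g x else cycprod g x ^+ r.
Proof.
move=> r_prime; rewrite cycprod_wpow gcdn_prime //.
by case: ifP; rewrite ?divnn ?prime_gt0 ?divn1.
Qed.

Definition cycle_points g k (D : {set gT}) : {set 'I_n} :=
  [set x | (#|porbit g.2 x| == k) && (cycprod g x \in D)].

Lemma card_cycle_points g k D : D \in classes [set: gT] ->
  #|cycle_points g k D| = (k * wtype g D k)%N.
Proof.
case/imsetP=> a _ ->; apply: card_porbit_points => x y /cycprod_porbit_class cyc_y.
by apply: class_transl; rewrite -cyc_y class_refl.
Qed.

Lemma mem_cycle_points_wpow_prime g r j C x : prime r ->
  (x \in cycle_points (wpow g r) j C) =
    if r %| #|porbit g.2 x| then x \in cycle_points g (r * j)%N C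
    else (#|porbit g.2 x| == j) && (cycprod g x ^+ r \in C).
Proof.
move=> r_prime; rewrite !inE wpow_perm card_porbitX_prime // cycprod_wpow_prime //.
by case: ifP => // r_dvd; rewrite eq_sym eqn_div ?prime_gt0 // eq_sym mulnC.
Qed.

Lemma card_cycle_points_wpow_prime g r j C : prime r ->
  #|cycle_points (wpow g r) j C| =
    (#|cycle_points g (r * j)%N C| +
     if r %| j then 0
     else #|[set x | (#|porbit g.2 x| == j) && (cycprod g x ^+ r \in C)]|)%N.
Proof.
move=> r_prime; rewrite -(cardsID [set x | r %| #|porbit g.2 x|]); congr (_ + _)%N.
  apply: eq_card => x; rewrite inE mem_cycle_points_wpow_prime // inE.
  case: ifP => [_ | r_ndvd]; first by rewrite andbT.
  by rewrite andbF inE; case: eqP => //= k_rj; rewrite k_rj dvdn_mulr in r_ndvd.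
case: ifP => [r_dvd | r_ndvd].
  apply: eq_card0 => x; rewrite in_setD mem_cycle_points_wpow_prime // !inE.
  by case: ifP => //= r_k; case: eqP => // k_j; rewrite k_j r_dvd in r_k.
apply: eq_card => x; rewrite in_setD mem_cycle_points_wpow_prime // !inE.
by case: ifP => //= r_k; case: eqP => // k_j; rewrite -k_j r_k in r_ndvd.
Qed.

End WreathPowers.

Unset Implicit Arguments. Set Strict Implicit.

Theorem lemma4p2 (gT : finGroupType) (n r : nat) (g : wreath gT n) :
  prime r ->
  forall C : {set gT}, C \in classes [set: gT] ->
  forall j : nat, 1 <= j <= n ->
    wtype (wpow g r) C j =
      (if ~~ (r %| j)
       then \sum_(D in classes [set: gT] | class_pow D r == C) wtype g D j
              + r * wtype g C (r * j)
       else r * wtype g C (r * j)).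
Proof.
move=> r_prime C C_class j /andP[j_gt0 _].
apply/eqP; rewrite -(eqn_pmul2l j_gt0) -card_cycle_points //.
rewrite card_cycle_points_wpow_prime // card_cycle_points // -mulnA.
case: (r %| j) => /=; first by rewrite addn0 mulnCA.
rewrite card_preim_class_pow // mulnDr big_distrr /= mulnCA addnC eqn_add2r.
by apply/eqP/eq_bigr => D /andP[D_class _]; rewrite card_cycle_points.
Qed.
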